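(* Let $\mathfrak M\models S_{\overline\alpha}$. Assume that $d_{\mathfrak M}(\mathfrak A)=0$ for every finite $\mathfrak A\subseteq\mathfrak M$ and that $\mathfrak M$ has finite closures. Then $\mathfrak M$ is atomic.
   Context: Fix a finite relational language $L$ in which every relation symbol has arity at least $2$. $K_L$ is the class of all finite $L$-structures (including the empty one) in which every relation symbol is interpreted symmetrically and irreflexively. Fix $\overline\alpha:L\to(0,1]$, writing $\overline\alpha_E=\overline\alpha(E)$, such that it is not the case that all symbols of $L$ are binary and $\overline\alpha_E=1$ for all $E$. For $\mathfrak A\in K_L$ let $N_E(\mathfrak A)$ be the number of subsets of $A$ on which $E$ holds and $\delta(\mathfrak A)=|A|-\sum_{E}\overline\alpha_E N_E(\mathfrak A)$; subsets of a structure are identified with induced substructures. $K_{\overline\alpha}=\{\mathfrak A\in K_L:\delta(\mathfrak A')\ge0\text{ for all substructures }\mathfrak A'\subseteq\mathfrak A\}$. For $\mathfrak A\subseteq\mathfrak B$ in $K_L$, $\mathfrak A\le\mathfrak B$ means $\delta(\mathfrak A)\le\delta(\mathfrak A')$ for all $\mathfrak A\subseteq\mathfrak A'\subseteq\mathfrak B$; for finite $\mathfrak A\subseteq\mathfrak M$, $\mathfrak A\le\mathfrak M$ means $\mathfrak A\le\mathfrak B$ for every finite $\mathfrak A\subseteq\mathfrak B\subseteq\mathfrak M$. $S_{\overline\alpha}$ is the theory whose models $\mathfrak M$ are those in which every finite substructure lies in $K_{\overline\alpha}$ and, for all $\mathfrak A\le\mathfrak B$ in $K_{\overline\alpha}$,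 every embedding $\mathfrak A\to\mathfrak M$ extends to an embedding $\mathfrak B\to\mathfrak M$. $\mathfrak M$ has finite closures if every finite $\mathfrak A\subseteq\mathfrak M$ is contained in a finite $\mathfrak B\subseteq\mathfrak M$ with $\mathfrak B\le\mathfrak M$. $d_{\mathfrak M}(\mathfrak A)=\inf\{\delta(\mathfrak B):\mathfrak A\subseteq\mathfrak B,\ \mathfrak B\text{ finite},\ \mathfrak B\le\mathfrak M\}$. *)

From HB Require Import structures.
From mathcomp Require Import all_boot all_order all_algebra all_fingroup.
From mathcomp Require Import finmap.
From mathcomp Require Import boolp classical_sets reals Rstruct.
From Stdlib Require Import Reals.

Unset Implicit Arguments.
Unset Printing Implicit Defensive.

Import Order.TTheory GRing.Theory Num.Theory.
Local Open Scope fset_scope.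
Local Open Scope ring_scope.

Section Hrushovski.

Variable L : finType.
Variable ar : L -> nat.
Variable alpha : L -> R.

Definition interp (T : choiceType) := forall E : L, ('I_(ar E) -> T) -> bool.

Section Finite.
Variables (T : choiceType) (r : interp T).

(* The induced substructure on the finite set A is in K_L: every relation is
   symmetric (invariant under permuting arguments) and irreflexive (holds only
   on tuples of pairwise distinct elements). *)
Definition in_KL (A : {fset T}) : Prop :=
  forall (E : L) (t : 'I_(ar E) -> T), (forall i, t i \in A) ->
    (forall s : {perm 'I_(ar E)}, r E (fun i => t (s i)) = r E t) /\
    (r E t -> injective t).

Definition holds_on (E : L) (S : {fset T}) : bool :=
  [exists t : {ffun 'I_(ar E) -> S}, injectiveb t && r E (fun i => val (t i))].

Definition N_E (E : L) (A : {fset T}) : nat :=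
  #|` [fset S in fpowerset A | (#|` S| == ar E) && holds_on E S]|.

Definition delta (A : {fset T}) : R :=
  (#|` A|)%:R - \sum_(E : L) alpha E * (N_E E A)%:R.

Definition in_Kalpha (A : {fset T}) : Prop :=
  in_KL A /\ forall A' : {fset T}, A' `<=` A -> 0 <= delta A'.

Definition strong (A B : {fset T}) : Prop :=
  A `<=` B /\ forall A' : {fset T}, A `<=` A' -> A' `<=` B -> delta A <= delta A'.

Definition strongM (A : {fset T}) : Prop :=
  forall B : {fset T}, A `<=` B -> strong A B.

Definition finite_closures : Prop :=
  forall A : {fset T}, exists B : {fset T}, A `<=` B /\ strongM B.

Definition dM (A : {fset T}) : R :=
  inf [set delta B | B in [set B : {fset T} | A `<=` B /\ strongM B]].

End Finite.

Definition embeds (T M : choiceType) (r : interp T) (rM : interp M)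
  (A : {fset T}) (f : T -> M) : Prop :=
  {in A &, injective f} /\
  forall (E : L) (t : 'I_(ar E) -> T), (forall i, t i \in A) ->
    rM E (fun i => f (t i)) = r E t.

(* (M, rM) is a model of S_alpha. Finite structures B (with substructure A)
   are represented as finite subsets of an arbitrary L-structure (T, r). *)
Definition model_S (M : choiceType) (rM : interp M) : Prop :=
  (forall A : {fset M}, in_Kalpha M rM A) /\
  forall (T : choiceType) (r : interp T) (A B : {fset T}),
    in_Kalpha T r B -> strong T r A B ->
    forall f : T -> M, embeds T M r rM A f ->
      exists g : T -> M, embeds T M r rM B g /\ {in A, g =1 f}.

Inductive form : Type :=
  | FEq : nat -> nat -> form
  | FRel : forall E : L, ('I_(ar E) -> nat) -> form
  | FNot : form -> form
  | FAnd : form -> form -> form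
  | FEx : nat -> form -> form.

Fixpoint fv (phi : form) : seq nat :=
  match phi with
  | FEq i j => [:: i; j]
  | FRel E v => map v (enum 'I_(ar E))
  | FNot p => fv p
  | FAnd p q => fv p ++ fv q
  | FEx x p => filter (predC1 x) (fv p)
  end.

Fixpoint sat (M : choiceType) (rM : interp M) (s : nat -> M) (phi : form)
  : Prop :=
  match phi with
  | FEq i j => s i = s j
  | FRel E v => rM E (fun k => s (v k))
  | FNot p => ~ sat M rM s p
  | FAnd p q => sat M rM s p /\ sat M rM s q
  | FEx x p => exists m : M, sat M rM (fun i => if i == x then m else s i) p
  end.

Definition fv_lt (n : nat) (phi : form) : bool := all (fun i : nat => ltn i n) (fv phi).

(* M is atomic: for every n-tuple (the values s 0, ..., s (n-1)), its complete
   type over the empty set is isolated, i.e. some formula phi(x_0..x_(n-1))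
   true of the tuple implies in M every formula psi(x_0..x_(n-1)) true of it. *)
Definition atomic (M : choiceType) (rM : interp M) : Prop :=
  forall (n : nat) (s : nat -> M),
    exists phi : form, fv_lt n phi /\ sat M rM s phi /\
      forall psi : form, fv_lt n psi -> sat M rM s psi ->
        forall s' : nat -> M, sat M rM s' phi -> sat M rM s' psi.

End Hrushovski.

Arguments interp {L} ar T.
Arguments in_KL {L ar T} r A.
Arguments holds_on {L ar T} r E S.
Arguments N_E {L ar T} r E A.
Arguments delta {L ar} alpha {T} r A.
Arguments in_Kalpha {L ar} alpha {T} r A.
Arguments strong {L ar} alpha {T} r A B.
Arguments strongM {L ar} alpha {T} r A.
Arguments finite_closures {L ar} alpha {T} r.
Arguments dM {L ar} alpha {T} r A.
Arguments embeds {L ar T M} r rM A f.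
Arguments model_S {L ar} alpha {M} rM.
Arguments form {L} ar.
Arguments fv {L ar} phi.
Arguments sat {L ar M} rM s phi.
Arguments fv_lt {L ar} n phi.
Arguments atomic {L ar M} rM.

(* Every finite A lies in a finite C with delta C = 0: if C0 is a finite
   closure of A, submodularity of delta gives delta (C `&` C0) <= delta C for
   every C <= M containing A, so the least value of delta on the finitely many
   D with A `<=` D `<=` C0 bounds below the set whose infimum is dM A = 0.
   Finite sets of predimension 0 are strong in M and embeddings do not raise
   delta, so partial embeddings between such sets form a back-and-forth system
   (the genericity axioms of S_alpha extend them) and preserve every formula.
   The type of a tuple is therefore isolated by the existentially quantified
   diagram of a set of predimension 0 containing it. *)

From Pilot Require Import Defs.
From HB Require Import structures.
From mathcomp Require Import all_boot all_order all_algebra all_fingroup.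
From mathcomp Require Import finmap.
From mathcomp Require Import boolp classical_sets reals Rstruct.
From Stdlib Require Import Reals.
From mathcomp Require Import zify lra.
Set Implicit Arguments.
Unset Strict Implicit.
Unset Printing Implicit Defensive.

Import Order.TTheory GRing.Theory Num.Theory.
Local Open Scope fset_scope.
Local Open Scope ring_scope.

Arguments FEq {L ar}.
Arguments FRel {L ar}.
Arguments FNot {L ar}.
Arguments FAnd {L ar}.
Arguments FEx {L ar}.

Lemma mem_imfset_in (T U : choiceType) (f : T -> U) (B S : {fset T}) x :
  {in B &, injective f} -> S `<=` B -> x \in B -> (f x \in f @` S) = (x \in S).
Proof.
move=> finj SB xB; apply/imfsetP/idP => [[y /= yS fxy]|xS]; last by exists x.
by rewrite (finj x y xB (fsubsetP SB y yS) fxy).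
Qed.

Lemma imfset_in_inj (T U : choiceType) (f : T -> U) (B S1 S2 : {fset T}) :
  {in B &, injective f} -> S1 `<=` B -> S2 `<=` B -> f @` S1 = f @` S2 -> S1 = S2.
Proof.
move=> finj S1B S2B fS12; apply/fsetP => x.
have [xB|xNB] := boolP (x \in B); first by rewrite -!(mem_imfset_in finj _ xB) ?fS12.
by apply/idP/idP => [/(fsubsetP S1B)|/(fsubsetP S2B)]; rewrite (negbTE xNB).
Qed.

Lemma exists_seq_minimizer (T : eqType) (d : Order.disp_t) (X : orderType d)
    (F : T -> X) (s : seq T) :
  s != [::] -> exists2 x, x \in s & forall y, y \in s -> (F x <= F y)%O.
Proof.
elim: s => [//|a s IH] _.
have [->|/IH [x xs xmin]] := eqVneq s [::].
  by exists a => [|y]; rewrite ?mem_head // inE => /eqP ->.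
have [Fax|Fxa] := leP (F a) (F x).
  exists a; first exact: mem_head.
  by move=> y; rewrite inE => /predU1P [-> //|/xmin]; apply: le_trans.
exists x; first by rewrite inE xs orbT.
by move=> y; rewrite inE => /predU1P [->|/xmin //]; apply: ltW.
Qed.

Section Predimension.
Variables (L : finType) (ar : L -> nat) (alpha : L -> R).
Hypothesis alpha_ge0 : forall E, 0 <= alpha E.

Section OneStructure.
Variables (T : choiceType) (r : interp ar T).
Local Notation delta := (delta alpha r).

Definition holding_subsets (E : L) (A : {fset T}) :=
  [fset S in fpowerset A | (#|` S| == ar E) && holds_on r E S].

Lemma N_E_card E A : N_E r E A = #|` holding_subsets E A|.
Proof. by []. Qed.

Lemma mem_holding_subsets E A S :
  (S \in holding_subsets E A) = [&& S `<=` A, #|` S| == ar E & holds_on r E S].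
Proof. by rewrite !inE /= fpowersetE. Qed.

Lemma N_E_fsetUI E X Y :
  (N_E r E X + N_E r E Y <= N_E r E (X `|` Y) + N_E r E (X `&` Y))%nat.
Proof.
rewrite !N_E_card -cardfsUI; apply: leq_add; apply/fsubset_leq_card/fsubsetP => S.
  rewrite in_fsetU !mem_holding_subsets.
  by case/orP => /and3P[SX -> ->]; rewrite (fsubset_trans SX) ?fsubsetUl ?fsubsetUr.
rewrite in_fsetI !mem_holding_subsets => /andP[/and3P[SX -> ->] /and3P[SY _ _]].
by rewrite fsubsetI SX SY.
Qed.

Lemma delta_fsetUI X Y : delta (X `|` Y) + delta (X `&` Y) <= delta X + delta Y.
Proof.
rewrite /Defs.delta addrACA [leRHS]addrACA -!natrD cardfsUI lerD2l -!opprD lerN2.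
rewrite -!big_split /=; apply: ler_sum => E _.
by rewrite -!mulrDr ler_wpM2l // -!natrD ler_nat N_E_fsetUI.
Qed.

Lemma delta_fsetI_strongM B C : strongM alpha r B -> delta (C `&` B) <= delta C.
Proof.
move=> sB; have [_ /(_ (C `|` B))] := sB _ (fsubsetUr C B).
move=> /(_ (fsubsetUr C B) (fsubset_refl _)); have := delta_fsetUI C B; lra.
Qed.

End OneStructure.

Section Embedding.
Variables (T U : choiceType) (r : interp ar T) (rU : interp ar U).
Variables (B : {fset T}) (f : T -> U).
Hypothesis femb : embeds r rU B f.

Lemma holds_on_imfset E S : S `<=` B -> holds_on r E S -> holds_on rU E (f @` S).
Proof.
move=> SB /existsP [t /andP [tinj rt]].
have ftS i : f (val (t i)) \in f @` S by apply: in_imfset; exact: valP.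
have tB i : val (t i) \in B by apply: (fsubsetP SB); exact: valP.
apply/existsP; exists [ffun i => [` ftS i]]; apply/andP; split.
  apply/injectiveP => i j; rewrite !ffunE => /(congr1 val) /= /(femb.1 _ _ (tB i) (tB j)).
  by move/val_inj; apply: (injectiveP _ tinj).
rewrite (_ : (fun i => _) = fun i => f (val (t i))); last by apply: funext => i; rewrite ffunE.
by rewrite (femb.2 E (fun i => val (t i))).
Qed.

Lemma N_E_imfset E : (N_E r E B <= N_E rU E (f @` B))%nat.
Proof.
have img_inj : {in holding_subsets r E B &, injective (fun S => f @` S)}.
  move=> S1 S2; rewrite !mem_holding_subsets => /and3P[S1B _ _] /and3P[S2B _ _].
  exact: imfset_in_inj femb.1 S1B S2B.
rewrite !N_E_card; move/card_in_imfsetP/eqP: img_inj => <-.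
apply/fsubset_leq_card/fsubsetP => _ /imfsetP [S /= + ->].
rewrite !mem_holding_subsets => /and3P [SB cardS holdS].
have /card_in_imfsetP/eqP -> : {in S &, injective f}.
  by move=> x y xS yS; apply: femb.1; apply: (fsubsetP SB).
rewrite cardS holds_on_imfset // !andbT.
by apply/fsubsetP => _ /imfsetP [x /= xS ->]; apply/in_imfset/(fsubsetP SB).
Qed.

Lemma delta_imfset : delta alpha rU (f @` B) <= delta alpha r B.
Proof.
rewrite /Defs.delta; have /card_in_imfsetP/eqP -> := femb.1.
rewrite lerD2l lerN2; apply: ler_sum => E _.
by rewrite ler_wpM2l // ler_nat N_E_imfset.
Qed.

End Embedding.
End Predimension.

Section Model.
Variables (L : finType) (ar : L -> nat) (alpha : L -> R).
Hypothesis alpha_ge0 : forall E, 0 <= alpha E.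
Variables (M : choiceType) (rM : interp ar M).
Arguments rM : clear implicits.
Hypothesis hM : model_S alpha rM.
Local Notation delta := (delta alpha rM).
Local Notation form := (Defs.form ar).

Lemma delta_ge0 A : 0 <= delta A.
Proof. by have [_] := hM.1 A; apply; apply: fsubset_refl. Qed.

Lemma strong_of_delta0 B C : delta B = 0 -> B `<=` C -> strong alpha rM B C.
Proof. by move=> dB0 BC; split => // A' _ _; rewrite dB0 delta_ge0. Qed.

Hypothesis hd : forall A, dM alpha rM A = 0.
Hypothesis hcl : finite_closures alpha rM.

Lemma zero_delta_superset A : exists C, A `<=` C /\ delta C = 0.
Proof.
have [C0 [AC0 sC0]] := hcl A.
pose Ds := [seq D <- enum_fset (fpowerset C0) | A `<=` D].
have C0_Ds : C0 \in Ds by rewrite mem_filter AC0 fpowersetE fsubset_refl.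
have [|D0 + D0min] := exists_seq_minimizer delta (s := Ds).
  by apply: contraTneq C0_Ds => ->.
rewrite mem_filter => /andP [AD0 _]; exists D0; split => //.
apply/eqP; rewrite eq_le delta_ge0 andbT -(hd A).
apply: lb_le_inf; first by exists (delta C0), C0.
move=> _ [C [AC _] <-]; apply: le_trans (delta_fsetI_strongM alpha_ge0 _ sC0).
by apply: D0min; rewrite mem_filter fsubsetI AC AC0 fpowersetE fsubsetIr.
Qed.

Definition zero_emb (f : M -> M) (B : {fset M}) := delta B = 0 /\ embeds rM rM B f.

Lemma zero_emb_extend f B m :
  zero_emb f B -> exists g C, [/\ zero_emb g C, B `<=` C, m \in C & {in B, g =1 f}].
Proof.
move=> [dB0 femb].
have [C [mBC dC0]] := zero_delta_superset (m |` B).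
have BC : B `<=` C by apply: fsubset_trans mBC; apply: fsubsetU1.
have [g [gemb gf]] := hM.2 M rM B C (hM.1 C) (strong_of_delta0 dB0 BC) f femb.
by exists g, C; split => //; apply: (fsubsetP mBC); apply: fset1U1.
Qed.

Definition inv_on (f : M -> M) (B : {fset M}) (y : M) : M :=
  nth y (enum_fset B) (find (fun b => f b == y) (enum_fset B)).

Lemma inv_onK f B : {in B &, injective f} -> {in B, cancel f (inv_on f B)}.
Proof.
move=> finj b bB; have hasb : has (fun b' => f b' == f b) (enum_fset B).
  by apply/hasP; exists b.
apply: finj => //; first by rewrite /inv_on mem_nth -?has_find.
exact/eqP/(nth_find _ hasb).
Qed.

Lemma zero_emb_inv f B : zero_emb f B -> zero_emb (inv_on f B) (f @` B).
Proof.
move=> [dB0 femb]; have [finj frel] := femb; have invK := inv_onK finj.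
have invP y : y \in f @` B -> inv_on f B y \in B /\ f (inv_on f B y) = y.
  by case/imfsetP => x /= xB ->; rewrite invK.
split.
  by apply/eqP; rewrite eq_le delta_ge0 andbT -dB0 (delta_imfset alpha_ge0 femb).
split.
  by move=> _ _ /imfsetP [x /= xB ->] /imfsetP [y /= yB ->]; rewrite !invK // => ->.
move=> E t tfB; have -> : rM E t = rM E (fun i => f (inv_on f B (t i))).
  by congr (rM E _); apply: funext => i; rewrite (invP _ (tfB i)).2.
by rewrite frel // => i; case: (invP _ (tfB i)).
Qed.

Definition agree_on (f : M -> M) (B : {fset M}) (s s' : nat -> M) (xs : seq nat) :=
  {in xs, forall i, s i \in B /\ s' i = f (s i)}.

Lemma sat_FEx_zero_emb x (p : form) :
    (forall f B s s', zero_emb f B -> agree_on f B s s' (fv p) ->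
      sat rM s p -> sat rM s' p) ->
  forall f B s s', zero_emb f B -> agree_on f B s s' (fv (FEx x p)) ->
    sat rM s (FEx x p) -> sat rM s' (FEx x p).
Proof.
move=> IH f B s s' fB ag [m sm].
have [g [C [gC BC mC gf]]] := zero_emb_extend m fB.
exists (g m); apply: IH gC _ sm => i ifv /=.
case: eqVneq => [_|ix]; first by split.
have [sB ->] : s i \in B /\ s' i = f (s i) by apply: ag; rewrite mem_filter /= ix.
by split; [apply: (fsubsetP BC) | rewrite gf].
Qed.

Lemma sat_zero_emb (phi : form) f B s s' :
  zero_emb f B -> agree_on f B s s' (fv phi) -> sat rM s phi <-> sat rM s' phi.
Proof.
elim: phi f B s s' => [i j|E v|p IH|p IHp q IHq|x p IH] f B s s' fB ag /=.
- have [si ->] := ag i (mem_head _ _).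
  have [sj ->] : s j \in B /\ s' j = f (s j) by apply: ag; rewrite !inE eqxx orbT.
  by split => [->|/(fB.2.1 _ _ si sj)].
- have vB k : s (v k) \in B /\ s' (v k) = f (s (v k)).
    by apply: ag; apply: map_f; rewrite mem_enum.
  rewrite (_ : (fun k => s' (v k)) = fun k => f (s (v k))).
    by rewrite (fB.2.2 E (fun k => s (v k))) // => k; case: (vB k).
  by apply: funext => k; rewrite (vB k).2.
- by rewrite (IH f B s s' fB ag).
- by rewrite (IHp f B s s') ?(IHq f B s s') // => i ifv; apply: ag; rewrite mem_cat ifv ?orbT.
- have IH1 f' B' s1 s2 := fun fB' ag' => (IH f' B' s1 s2 fB' ag').1.
  split; first exact: sat_FEx_zero_emb IH1 _ _ _ _ fB ag.
  apply: sat_FEx_zero_emb IH1 _ _ _ _ (zero_emb_inv fB) _ => i /ag [sB ->].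
  by split; [exact: in_imfset | rewrite inv_onK //; exact: fB.2.1].
Qed.

End Model.

Section Formulas.
Variables (L : finType) (ar : L -> nat).
Local Notation form := (Defs.form ar).

Definition ftrue : form := FEx 0 (FEq 0 0).

Fixpoint bigAnd (ps : seq form) : form :=
  if ps is p :: ps' then FAnd p (bigAnd ps') else ftrue.

Fixpoint exs (a k : nat) (p : form) : form :=
  if k is k'.+1 then FEx a (exs a.+1 k' p) else p.

Lemma fv_lt_bigAnd (X : eqType) (F : X -> form) b xs :
  (forall x, x \in xs -> fv_lt b (F x)) -> fv_lt b (bigAnd (map F xs)).
Proof.
elim: xs => [//|x xs IH] Fb; rewrite /fv_lt /= all_cat.
apply/andP; split; first exact/Fb/mem_head.
by apply: IH => y yxs; apply: Fb; rewrite inE yxs orbT.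
Qed.

Lemma fv_lt_exs a k p : fv_lt (a + k) p -> fv_lt a (exs a k p).
Proof.
elim: k a p => [|k IH] a p /=; first by rewrite addn0.
rewrite -addSnnS => /IH; rewrite /fv_lt /= all_filter.
by apply: sub_all => i /=; case: eqVneq => //= ia; lia.
Qed.

Variables (M : choiceType) (rM : interp ar M).

Definition override (a k : nat) (w s : nat -> M) (i : nat) : M :=
  if (a <= i < a + k)%nat then w i else s i.

Lemma override_lt a k w s i : (i < a)%nat -> override a k w s i = s i.
Proof. by move=> ia; rewrite /override (leqNgt a i) ia. Qed.

Lemma override_in a k w s i : (a <= i < a + k)%nat -> override a k w s i = w i.
Proof. by rewrite /override => ->. Qed.

Lemma override_S a k w s m :
  override a.+1 k w (fun i => if i == a then m else s i) =
  override a k.+1 (fun i => if i == a then m else w i) s.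
Proof.
apply: funext => i; rewrite /override; case: eqVneq => [->|ia].
  by rewrite ltnn leqnn addnS ltnS leq_addr.
by have -> : (a.+1 <= i < a.+1 + k)%nat = (a <= i < a + k.+1)%nat by apply/idP/idP; lia.
Qed.

Lemma sat_ftrue s : sat rM s ftrue.
Proof. by exists (s 0%nat). Qed.

Lemma sat_bigAnd (X : eqType) (F : X -> form) s xs :
  sat rM s (bigAnd (map F xs)) <-> (forall x, x \in xs -> sat rM s (F x)).
Proof.
elim: xs => [|x xs IH] /=; first by split => // _; apply: sat_ftrue.
rewrite IH; split => [[Fx Fxs] y|Fxxs]; first by rewrite inE => /predU1P [->|/Fxs].
by split => [|y yxs]; apply: Fxxs; rewrite ?mem_head // inE yxs orbT.
Qed.

Lemma sat_exs a k s p :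
  sat rM s (exs a k p) <-> exists w, sat rM (override a k w s) p.
Proof.
elim: k a s => [|k IH] a s /=.
  have o0 w : override a 0 w s = s.
    by apply: funext => i; rewrite /override addn0 ltnNge andbN.
  by split => [sp|[w]]; [exists s | ]; rewrite o0.
split => [[m /IH [w sw]]|[w sw]].
  by exists (fun i => if i == a then m else w i); rewrite -override_S.
exists (w a); apply/IH; exists w; rewrite override_S.
by rewrite (_ : (fun i => _) = w) // ; apply: funext => i; case: eqVneq => [->|].
Qed.

End Formulas.

Section Diagram.
Variables (L : finType) (ar : L -> nat) (M : choiceType) (rM : interp ar M).
Arguments rM : clear implicits.
Variables (n : nat) (s : nat -> M) (C : {fset M}).
Hypothesis sC : forall i, (i < n)%nat -> s i \in C.
Local Notation form := (Defs.form ar).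

(* Variables x_0 .. x_(n-1) stand for the tuple s and x_(n + j) for the j-th
   element of C. *)
Let var (y : M) : nat := n + index y (enum_fset C).

Lemma var_in y : y \in C -> (n <= var y < n + #|` C|)%nat.
Proof. by move=> yC; rewrite leq_addr ltn_add2l index_mem. Qed.

Definition diagram_eqs : form :=
  bigAnd [seq FEq i (var (s i)) | i <- iota 0 n].

Definition diagram_neqs : form :=
  bigAnd [seq bigAnd [seq FNot (FEq (var y) (var z)) | z <- enum_fset C & z != y]
         | y <- enum_fset C].

Definition diagram_literal (E : L) (t : {ffun 'I_(ar E) -> C}) : form :=
  let atom := FRel E (fun a => var (val (t a))) in
  if rM E (fun a => val (t a)) then atom else FNot atom.

Definition diagram_rels : form :=
  bigAnd [seq bigAnd [seq diagram_literal t | t <- enum {ffun 'I_(ar E) -> C}]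
         | E <- enum L].

Definition isolating_formula : form :=
  exs n #|` C| (FAnd diagram_eqs (FAnd diagram_neqs diagram_rels)).

Lemma fv_lt_isolating : fv_lt n isolating_formula.
Proof.
have var_lt y : y \in C -> (var y < n + #|` C|)%nat by case/var_in/andP.
apply: fv_lt_exs; rewrite /fv_lt /= !all_cat; apply/and3P; split.
- apply: fv_lt_bigAnd => i; rewrite mem_iota => /andP [_ ltin].
  by rewrite /fv_lt /= var_lt ?sC // andbT ltn_addr.
- apply: fv_lt_bigAnd => y yC; apply: fv_lt_bigAnd => z; rewrite mem_filter.
  by case/andP => _ zC; rewrite /fv_lt /= !var_lt.
- apply: fv_lt_bigAnd => E _; apply: fv_lt_bigAnd => t _.
  by rewrite /diagram_literal; case: ifP => _; apply/allP => _ /mapP [a _ ->];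
    apply: var_lt; apply: valP.
Qed.

Lemma sat_isolating : sat rM s isolating_formula.
Proof.
apply/sat_exs; exists (fun i => nth (s 0%nat) (enum_fset C) (i - n)).
set sigma := override _ _ _ _.
have sigma_var y : y \in C -> sigma (var y) = y.
  by move=> yC; rewrite /sigma override_in ?var_in // addKn nth_index.
split; [|split].
- apply/sat_bigAnd => i; rewrite mem_iota => /andP [_ ltin] /=.
  by rewrite sigma_var ?sC // /sigma override_lt.
- apply/sat_bigAnd => y yC; apply/sat_bigAnd => z; rewrite mem_filter.
  by case/andP => zy zC /=; rewrite !sigma_var // => yz; rewrite yz eqxx in zy.
- apply/sat_bigAnd => E _; apply/sat_bigAnd => t _.
  have sigma_t : (fun a => sigma (var (val (t a)))) = fun a => val (t a).
    by apply: funext => a; rewrite sigma_var //; apply: valP.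
  by rewrite /diagram_literal; case: ifP => /= h; rewrite sigma_t h.
Qed.

Lemma isolating_embeds s' : sat rM s' isolating_formula ->
  exists g, embeds rM rM C g /\ forall i, (i < n)%nat -> s' i = g (s i).
Proof.
case/sat_exs => w /= [eqs [neqs rels]].
have sigma_var y : y \in C -> override n #|` C| w s' (var y) = w (var y).
  by move=> yC; rewrite override_in ?var_in.
exists (fun y => w (var y)); split; [split|].
- move=> y z yC zC gyz; apply/eqP; apply: contraT => yz.
  move/sat_bigAnd: neqs => /(_ y yC) /sat_bigAnd /(_ z).
  by rewrite mem_filter eq_sym yz zC /= !sigma_var // => /(_ isT).
- move=> E t tC; pose u : {ffun 'I_(ar E) -> C} := [ffun a => [` tC a]].
  move/sat_bigAnd: rels => /(_ E (mem_enum _ _)) /sat_bigAnd /(_ u (mem_enum _ _)).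
  have sigma_u : (fun a => override n #|` C| w s' (var (val (u a)))) =
                 fun a => w (var (t a)).
    by apply: funext => a; rewrite ffunE /= sigma_var.
  have valu : (fun a => val (u a)) = t by apply: funext => a; rewrite ffunE.
  rewrite /diagram_literal valu; case: (rM E t) => /=; rewrite sigma_u //.
  by move/negP/negbTE.
- move=> i ltin; move/sat_bigAnd: eqs => /(_ i); rewrite mem_iota /= ltin.
  by rewrite override_lt // sigma_var ?sC //; apply.
Qed.

End Diagram.

Theorem lemma5p8
  (L : finType) (ar : L -> nat) (har : forall E : L, leq 2 (ar E))
  (alpha : L -> R) (halpha : forall E : L, 0 < alpha E <= 1)
  (hnontriv : ~ (forall E : L, ar E = 2%nat /\ alpha E = 1))
  (M : choiceType) (rM : interp ar M)
  (hM : model_S alpha rM)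
  (hd : forall A : {fset M}, dM alpha rM A = 0)
  (hcl : finite_closures alpha rM) :
  atomic rM.
Proof.
have alpha_ge0 E : 0 <= alpha E by case/andP: (halpha E) => /ltW.
move=> n s.
have [C [sC dC0]] := zero_delta_superset alpha_ge0 hM hd hcl [fset s i | i in iota 0 n].
have sC' i : (i < n)%nat -> s i \in C.
  by move=> ltin; apply/(fsubsetP sC)/in_imfset; rewrite /= mem_iota.
exists (isolating_formula rM n s C).
split; [exact: fv_lt_isolating | split; first exact: sat_isolating].
move=> psi psi_n s_psi s' /(isolating_embeds sC') [g [gemb s'g]].
suff ag : agree_on g C s s' (fv psi).
  exact: (sat_zero_emb alpha_ge0 hM hd hcl (conj dC0 gemb) ag).1.
by move=> i /(allP psi_n) ltin; split; [exact: sC' | exact: s'g].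
Qed.
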